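(* Let $n\ge1$, $\tau\in\mathfrak{S}_n$ and $1\le a<b\le n$. Then $\lambda(\tau)=\lambda\big(\overline{\tau}^{[a,b]}\big)$.
   Context: Permutations in one-line notation; $\mathrm{st}(a_1,\dots,a_p)$ is the permutation with the same relative order as distinct integers $a_i$. Trees: $\mathcal{Y}_n$ = rooted planar binary trees with $n$ internal nodes, $\mathcal{Y}_0=\{|\}$; $s\vee t$ = tree whose root has left subtree $s$ and right subtree $t$; $t=t_l\vee t_r$ uniquely. For $\sigma\in\mathfrak{S}_p,\tau\in\mathfrak{S}_q$, $\sigma\vee\tau=(\sigma(1)+q,\dots,\sigma(p)+q,p+q+1,\tau(1),\dots,\tau(q))$. $\lambda:\mathfrak{S}_n\to\mathcal{Y}_n$: $\lambda(\mathrm{id}_0)=|$, and for $j=\sigma^{-1}(n)$, $\lambda(\sigma)=\lambda(\mathrm{st}(\sigma(1),..,\sigma(j-1)))\vee\lambda(\mathrm{st}(\sigma(j+1),..,\sigma(n)))$. $\gamma:\mathcal{Y}_n\to\mathfrak{S}_n$: $\gamma(|)=\mathrm{id}_0$, $\gamma(t)=\gamma(t_l)\vee\gamma(t_r)$. For any permutation $\sigma$, $\overline{\sigma}:=\gamma(\lambda(\sigma))$. Given $\tau\in\mathfrak{S}_n$ and $1\le a<b\le n$, let $\mathsf{S}=\{s_1<\dots<s_m\}=\tau^{-1}([a,b])$, let $\sigma=\mathrm{st}(\tau(s_1),\dots,\tau(s_m))$, and define $\overline{\tau}^{[a,b]}\in\mathfrak{S}_n$ by $\overline{\tau}^{[a,b]}(i)=\tau(i)$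 if $i\notin\mathsf{S}$ and $\overline{\tau}^{[a,b]}(s_j)=a-1+\overline{\sigma}(j)$. *)

(* Permutations in one-line notation are sequences of nats. *)
From mathcomp Require Import all_boot.
Set Implicit Arguments. Unset Strict Implicit. Unset Printing Implicit Defensive.

Definition is_perm (n : nat) (s : seq nat) : bool := perm_eq s (iota 1 n).

Definition st (s : seq nat) : seq nat := [seq count (fun y => y <= x) s | x <- s].

Inductive bintree : Type := Leaf | Node of bintree & bintree.

Definition pvee (sg tau : seq nat) : seq nat :=
  let p := size sg in let q := size tau in
  [seq x + q | x <- sg] ++ (p + q).+1 :: tau.

Fixpoint lambda_aux (fuel : nat) (s : seq nat) : bintree :=
  match fuel with
  | 0 => Leaf
  | f.+1 =>
    if s is [::] then Leaf else
    let j := index (size s) s in   (* 0-based position of n, i.e. sigma^{-1}(n) - 1 *)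
    Node (lambda_aux f (st (take j s))) (lambda_aux f (st (drop j.+1 s)))
  end.

Definition lambda (s : seq nat) : bintree := lambda_aux (size s) s.

Fixpoint gamma (t : bintree) : seq nat :=
  match t with
  | Leaf => [::]
  | Node l r => pvee (gamma l) (gamma r)
  end.

Definition pbar (s : seq nat) : seq nat := gamma (lambda s).

Definition inab (a b : nat) (x : nat) : bool := (a <= x) && (x <= b).

Definition taubar (tau : seq nat) (a b : nat) : seq nat :=
  let sb := pbar (st (filter (inab a b) tau)) in
  mkseq (fun i => let x := nth 0 tau i in
                  if inab a b x then a - 1 + nth 0 sb (count (inab a b) (take i tau))
                  else x) (size tau).

(* lambda(sigma) is the decreasing binary tree of sigma: split at the maximum
   and recurse on both sides.  It makes sense for any sequence of naturals,
   depends only on the relative order of the entries (so st and the shift by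
   a - 1 do not change it), and gamma is a section of it.  Now taubar tau a b
   is tau with its entries in [a, b] refilled, in order, by a sequence u of
   values in [a, b] whose tree is that of the subsequence it replaces.  Split
   tau at its maximum x: if x lies in [a, b] it is matched by the maximum of u,
   whose tree splits in the same way; if x > b it stays the maximum, and u
   splits at the same place because the tree of a concatenation determines the
   trees of its parts of given lengths; if x < a nothing is refilled. *)

From mathcomp Require Import all_boot zify.

Set Implicit Arguments.
Unset Strict Implicit.
Unset Printing Implicit Defensive.

Definition seqmax (s : seq nat) : nat := \max_(x <- s) x.

Lemma leq_seqmax s x : x \in s -> x <= seqmax s.
Proof. by move=> x_in; rewrite /seqmax (leq_bigmax_seq (F := id)). Qed.

Lemma seqmax_mem s : s != [::] -> seqmax s \in s.
Proof.
elim: s => // y s IH _; rewrite /seqmax big_cons inE -/(seqmax s).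
have [->|/IH s_max] := eqVneq s [::]; first by rewrite /seqmax big_nil maxn0 eqxx.
by rewrite /maxn; case: ltnP; rewrite ?s_max ?eqxx ?orbT.
Qed.

Lemma max_pivot s : s != [::] -> exists s1 x s2,
  [/\ s = s1 ++ x :: s2, x \notin s1 & {in s, forall y, y <= x}].
Proof.
move=> /seqmax_mem m_in; set m := seqmax s in m_in *; set i := index m s.
exists (take i s), m, (drop i.+1 s); split; last exact: leq_seqmax.
- by rewrite -drop_index // cat_take_drop.
- by apply/negP => /index_ltn; rewrite ltnn.
Qed.

Lemma max_pivot_ind (P : seq nat -> Prop) :
  P [::] ->
  (forall s1 x s2, x \notin s1 -> {in s1 ++ x :: s2, forall y, y <= x} ->
     P s1 -> P s2 -> P (s1 ++ x :: s2)) ->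
  forall s, P s.
Proof.
move=> P0 Ppivot s; elim: {s}(size s) {-2}s (leqnn (size s)) => [|n IH] s.
  by rewrite leqn0 size_eq0 => /eqP->.
have [->|/max_pivot [s1 [x [s2 [-> x_s1 x_max]]]]] := eqVneq s [::]; first by [].
rewrite size_cat /= => s_le; apply: Ppivot => //; apply: IH; lia.
Qed.

Fixpoint max_tree_rec (fuel : nat) (s : seq nat) : bintree :=
  if fuel is f.+1 then
    if s is [::] then Leaf else
    let j := index (seqmax s) s in
    Node (max_tree_rec f (take j s)) (max_tree_rec f (drop j.+1 s))
  else Leaf.

Definition max_tree (s : seq nat) : bintree := max_tree_rec (size s) s.

Fixpoint nodes (t : bintree) : nat :=
  if t is Node l r then (nodes l + nodes r).+1 else 0.

Lemma max_tree_rec_fuel f g s :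
  size s <= f -> size s <= g -> max_tree_rec f s = max_tree_rec g s.
Proof.
elim: f g s => [|f IH] [|g] [|y s] //= f_ge g_ge.
set s' := y :: s; have : index (seqmax s') s' < size s' by rewrite index_mem seqmax_mem.
by rewrite /= => lt_j; congr Node; apply: IH; rewrite ?size_take ?size_drop; try case: ifP; lia.
Qed.

Lemma max_tree_recS f s : s != [::] -> max_tree_rec f.+1 s =
  Node (max_tree_rec f (take (index (seqmax s) s) s))
       (max_tree_rec f (drop (index (seqmax s) s).+1 s)).
Proof. by case: s. Qed.

Lemma max_tree_cat s1 x s2 : x \notin s1 -> {in s1 ++ x :: s2, forall y, y <= x} ->
  max_tree (s1 ++ x :: s2) = Node (max_tree s1) (max_tree s2).
Proof.
move=> x_s1 x_max; rewrite /max_tree; set s := s1 ++ x :: s2.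
have s_max : seqmax s = x.
  apply/eqP; rewrite eqn_leq leq_seqmax ?mem_cat ?mem_head ?orbT // andbT.
  by apply/bigmax_leqP_seq => y y_in _; apply: x_max.
have -> : size s = (size s1 + size s2).+1 by rewrite size_cat addnS.
rewrite max_tree_recS; last by rewrite /s; case: (s1).
rewrite s_max /s index_pivot // take_size_cat // -cat_rcons drop_size_cat ?size_rcons //.
by congr Node; apply: max_tree_rec_fuel; rewrite ?leq_addr ?leq_addl.
Qed.

Lemma nodes_max_tree s : nodes (max_tree s) = size s.
Proof.
elim/max_pivot_ind: s => // s1 x s2 x_s1 x_max IH1 IH2.
by rewrite max_tree_cat //= IH1 IH2 size_cat addnS.
Qed.

Lemma max_tree_map_mono (g : nat -> nat) s :
  {in s &, {mono g : x y / x <= y}} -> max_tree (map g s) = max_tree s.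
Proof.
elim/max_pivot_ind: s g => // s1 x s2 x_s1 x_max IH1 IH2 g g_mono.
have x_in : x \in s1 ++ x :: s2 by rewrite mem_cat mem_head orbT.
rewrite map_cat /= !max_tree_cat //.
- by congr Node; [apply: IH1 | apply: IH2] => y z y_in z_in; apply: g_mono;
     rewrite mem_cat ?inE ?y_in ?z_in ?orbT.
- apply/mapP => -[y y_s1 gy_eq].
  have y_in : y \in s1 ++ x :: s2 by rewrite mem_cat y_s1.
  suff y_eq : y = x by rewrite -y_eq y_s1 in x_s1.
  by apply/eqP; rewrite eqn_leq x_max //= -(g_mono x y) // gy_eq.
- by rewrite -map_cons -map_cat => _ /mapP [y y_in ->]; rewrite g_mono // x_max.
Qed.

Lemma rank_mono s :
  {in s &, {mono (fun x => count (fun y => y <= x) s) : x z / x <= z}}.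
Proof.
move=> x z x_in _ /=; case: (leqP x z) => [le_xz|lt_zx].
  by apply: sub_count => y /= /leq_trans; apply.
apply/negbTE; rewrite -ltnNge; elim: s x_in => //= y s IH.
have le_yx : y <= z -> y <= x by move/leq_trans; apply; apply: ltnW.
rewrite inE => /orP[/eqP<-|/IH]; last by case: (y <= z) le_yx => [->|] //=; lia.
rewrite leqnn (leqNgt x z) lt_zx add1n ltnS.
by apply: sub_count => y' /= /leq_trans; apply; apply: ltnW.
Qed.

Lemma max_tree_st s : max_tree (st s) = max_tree s.
Proof. exact/max_tree_map_mono/rank_mono. Qed.

Fixpoint tree_take (k : nat) (t : bintree) : bintree :=
  if t is Node l r then
    if k <= nodes l then tree_take k l else Node l (tree_take (k - (nodes l).+1) r)
  else Leaf.

Fixpoint tree_drop (k : nat) (t : bintree) : bintree :=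
  if t is Node l r then
    if k <= nodes l then Node (tree_drop k l) r else tree_drop (k - (nodes l).+1) r
  else Leaf.

Lemma max_tree_take k s : max_tree (take k s) = tree_take k (max_tree s).
Proof.
elim/max_pivot_ind: s k => // s1 x s2 x_s1 x_max IH1 IH2 k.
rewrite max_tree_cat //= nodes_max_tree; case: leqP => [le_k|lt_k].
  by rewrite takel_cat.
rewrite take_cat ltnNge (ltnW lt_k) -(subnSK lt_k) /= max_tree_cat ?IH2 //.
move=> y; rewrite mem_cat inE => /orP[y_s1|/orP[/eqP->//|/mem_take y_s2]];
  by apply: x_max; rewrite mem_cat inE ?y_s1 ?y_s2 ?orbT.
Qed.

Lemma max_tree_drop k s : max_tree (drop k s) = tree_drop k (max_tree s).
Proof.
elim/max_pivot_ind: s k => // s1 x s2 x_s1 x_max IH1 IH2 k.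
rewrite max_tree_cat //= nodes_max_tree; case: leqP => [le_k|lt_k].
  rewrite drop_cat; case: ltnP => [_|ge_k]; last first.
    have -> : k = size s1 by apply/eqP; rewrite eqn_leq le_k ge_k.
    rewrite subnn drop0 -IH1 drop_size; apply: (@max_tree_cat [::]) => // y y_in.
    by apply: x_max; rewrite mem_cat y_in orbT.
  rewrite max_tree_cat ?IH1 //; first by apply: contra x_s1 => /mem_drop.
  move=> y; rewrite mem_cat => /orP[/mem_drop y_s1|y_s2];
    by apply: x_max; rewrite mem_cat ?y_s1 ?y_s2 ?orbT.
by rewrite drop_cat ltnNge (ltnW lt_k) -(subnSK lt_k) /= IH2.
Qed.

Lemma max_tree_cat_inj s1 s2 t1 t2 : size s1 = size t1 ->
  max_tree (s1 ++ s2) = max_tree (t1 ++ t2) ->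
  max_tree s1 = max_tree t1 /\ max_tree s2 = max_tree t2.
Proof.
move=> eq_size eq_tree.
have := congr1 (tree_drop (size s1)) eq_tree; have := congr1 (tree_take (size s1)) eq_tree.
by rewrite -!max_tree_take -!max_tree_drop !take_size_cat ?drop_size_cat.
Qed.

Lemma is_perm_size n s : is_perm n s -> size s = n.
Proof. by move/perm_size; rewrite size_iota. Qed.

Lemma is_perm_uniq n s : is_perm n s -> uniq s.
Proof. by move/perm_uniq->; apply: iota_uniq. Qed.

Lemma is_perm_mem n s x : is_perm n s -> (x \in s) = (0 < x <= n).
Proof. by move/perm_mem->; rewrite mem_iota add1n ltnS. Qed.

Lemma uniq_is_perm s :
  uniq s -> {in s, forall x, 0 < x <= size s} -> is_perm (size s) s.
Proof.
move=> s_uniq s_range; apply: uniq_perm => //; first exact: iota_uniq.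
have sub : {subset s <= iota 1 (size s)}.
  by move=> x /s_range; rewrite mem_iota add1n ltnS.
by have [] := uniq_min_size s_uniq sub; rewrite ?size_iota.
Qed.

Lemma size_st s : size (st s) = size s.
Proof. exact: size_map. Qed.

Lemma st_perm s : uniq s -> is_perm (size s) (st s).
Proof.
move=> s_uniq; rewrite -size_st; apply: uniq_is_perm.
  rewrite map_inj_in_uniq // => x y x_in y_in eq_rank; apply/eqP.
  by rewrite eqn_leq -(rank_mono x_in y_in) -(rank_mono y_in x_in) eq_rank leqnn.
move=> _ /mapP [x x_in ->]; rewrite size_st -has_count count_size andbT.
by apply/hasP; exists x.
Qed.

Lemma lambda_aux_max_tree f s :
  size s <= f -> is_perm (size s) s -> lambda_aux f s = max_tree s.
Proof.
elim: f s => [|f IH] s; first by case: s.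
have [->//|s_nil] := eqVneq s [::]; move=> le_f s_perm.
have /max_pivot [s1 [x [s2 [s_eq x_s1 x_max]]]] := s_nil.
have x_eq : x = size s.
  have n_in : size s \in s by rewrite (is_perm_mem _ s_perm) lt0n size_eq0 s_nil /=.
  have : x \in s by rewrite s_eq mem_cat mem_head orbT.
  rewrite (is_perm_mem _ s_perm) => /andP[_ x_le].
  by apply/eqP; rewrite eqn_leq x_le x_max.
have -> : lambda_aux f.+1 s = Node (lambda_aux f (st (take (index (size s) s) s)))
                                   (lambda_aux f (st (drop (index (size s) s).+1 s))).
  by case: (s) s_nil.
have [s1_uniq s2_uniq] : uniq s1 /\ uniq s2.
  by move: (is_perm_uniq s_perm); rewrite s_eq cat_uniq /= => /and3P[-> _ /andP[_ ->]].
rewrite -x_eq s_eq max_tree_cat //; last by rewrite -s_eq.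
rewrite index_pivot // take_size_cat // -cat_rcons drop_size_cat ?size_rcons //.
rewrite !IH ?max_tree_st ?size_st ?st_perm //; move: le_f; rewrite s_eq size_cat /=; lia.
Qed.

Lemma lambda_max_tree n s : is_perm n s -> lambda s = max_tree s.
Proof.
move=> s_perm; apply: lambda_aux_max_tree => //.
by rewrite (is_perm_size s_perm).
Qed.

Lemma pvee_perm p q sg tau :
  is_perm p sg -> is_perm q tau -> is_perm (p + q).+1 (pvee sg tau).
Proof.
rewrite /is_perm /pvee => sg_perm tau_perm.
rewrite (perm_size sg_perm) (perm_size tau_perm) !size_iota.
have shift : perm_eq [seq x + q | x <- sg] (iota q.+1 p).
  by rewrite -[q.+1]addn1 iotaDl (eq_map (addnC^~ q)); apply: perm_map.
apply: perm_trans (perm_cat shift (_ : perm_eq _ ((p + q).+1 :: iota 1 q))) _.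
  by rewrite perm_cons.
have -> : iota 1 (p + q).+1 = (iota 1 q ++ iota q.+1 p) ++ [:: (p + q).+1].
  by rewrite -[(p + q).+1]addn1 [p + q]addnC !iotaD add1n addn1.
by rewrite perm_catC perm_sym perm_catC.
Qed.

Lemma max_tree_pvee p q sg tau : is_perm p sg -> is_perm q tau ->
  max_tree (pvee sg tau) = Node (max_tree sg) (max_tree tau).
Proof.
move=> sg_perm tau_perm; have v_perm := pvee_perm sg_perm tau_perm.
rewrite /pvee (is_perm_size sg_perm) (is_perm_size tau_perm) in v_perm *.
rewrite max_tree_cat ?max_tree_map_mono //.
- by move=> x y _ _; rewrite leq_add2r.
- by apply/mapP => -[x]; rewrite (is_perm_mem _ sg_perm); lia.
- by move=> y; rewrite (is_perm_mem _ v_perm) => /andP[].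
Qed.

Lemma gamma_perm t : is_perm (nodes t) (gamma t).
Proof. by elim: t => [|l IHl r IHr] //=; apply: pvee_perm. Qed.

Lemma max_tree_gamma t : max_tree (gamma t) = t.
Proof.
elim: t => [|l IHl r IHr] //=.
by rewrite (max_tree_pvee (gamma_perm l) (gamma_perm r)) IHl IHr.
Qed.

Lemma pbar_perm n s : is_perm n s -> is_perm n (pbar s).
Proof.
move=> s_perm; rewrite /pbar (lambda_max_tree s_perm).
by rewrite -[n in is_perm n](is_perm_size s_perm) -nodes_max_tree gamma_perm.
Qed.

Lemma max_tree_pbar n s : is_perm n s -> max_tree (pbar s) = max_tree s.
Proof. by move=> s_perm; rewrite /pbar (lambda_max_tree s_perm) max_tree_gamma. Qed.

Lemma max_tree_filter_cat (P : pred nat) s1 x s2 : P x -> x \notin s1 ->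
  {in s1 ++ x :: s2, forall y, y <= x} ->
  max_tree (filter P (s1 ++ x :: s2)) =
  Node (max_tree (filter P s1)) (max_tree (filter P s2)).
Proof.
move=> Px x_s1 x_max.
have f_eq : filter P (s1 ++ x :: s2) = filter P s1 ++ x :: filter P s2.
  by rewrite filter_cat /= Px.
rewrite f_eq max_tree_cat ?mem_filter ?(negbTE x_s1) ?andbF // -f_eq => z.
by rewrite mem_filter => /andP[_ /x_max].
Qed.

Lemma max_tree_eq_Node u t1 t2 : max_tree u = Node t1 t2 ->
  exists u1 y u2, [/\ u = u1 ++ y :: u2, y \notin u1, {in u, forall z, z <= y},
                      max_tree u1 = t1 & max_tree u2 = t2].
Proof.
have [->//|/max_pivot [u1 [y [u2 [u_eq y_u1 y_max]]]]] := eqVneq u [::].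
rewrite {1}u_eq max_tree_cat -?u_eq // => -[u1_tree u2_tree].
by exists u1, y, u2.
Qed.

Section Refill.
Variables (T : eqType) (P : pred T).

(* When u runs out, the remaining entries satisfying P are kept. *)
Fixpoint refill (s u : seq T) : seq T :=
  if s is x :: s' then
    if P x then head x u :: refill s' (behead u) else x :: refill s' u
  else [::].

Lemma refill_nil s : refill s [::] = s.
Proof. by elim: s => //= x s ->; case: ifP. Qed.

Lemma size_refill s u : size (refill s u) = size s.
Proof. by elim: s u => //= x s IH u; case: ifP; rewrite /= IH. Qed.

Lemma refill_cat s1 s2 u : refill (s1 ++ s2) u =
  refill s1 (take (count P s1) u) ++ refill s2 (drop (count P s1) u).
Proof.
elim: s1 u => [|x s1 IH] u /=; first by rewrite drop0.
case: ifP => _ /=; last by rewrite IH.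
by case: u => [|y u] /=; rewrite IH // !refill_nil.
Qed.

Lemma perm_refill s u : size u = count P s ->
  perm_eq (refill s u) (filter (predC P) s ++ u).
Proof.
elim: s u => [|x s IH] u /=; first by case: u.
case: ifP => /= Px; last by rewrite perm_cons; apply: IH.
case: u => [|y u] //= [u_size]; rewrite perm_sym -cat1s perm_catCA /= perm_cons perm_sym.
exact: IH.
Qed.

Lemma mem_refill s u z : size u = count P s ->
  (z \in refill s u) = (z \in s) && ~~ P z || (z \in u).
Proof. by move/perm_refill/perm_mem->; rewrite mem_cat mem_filter andbC. Qed.

Lemma refill_perm s u : size u = count P s -> perm_eq u (filter P s) ->
  perm_eq (refill s u) s.
Proof.
move=> u_size u_perm; apply: perm_trans (perm_refill u_size) _.
by rewrite perm_sym -(perm_filterC P s) perm_catC perm_cat2l perm_sym.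
Qed.

Lemma nth_refill x0 s u i : size u = count P s -> i < size s ->
  nth x0 (refill s u) i =
  if P (nth x0 s i) then nth x0 u (count P (take i s)) else nth x0 s i.
Proof.
elim: s u i => [|x s IH] u [|i] //= u_size lt_i; case: ifP => Px //=;
  rewrite Px /= in u_size.
- by case: u u_size.
- by case: u u_size => [|y u] //= [u_size]; rewrite IH // add1n.
- by rewrite IH.
Qed.

End Refill.

Lemma refill_bounded (P : pred nat) s u m : size u = count P s ->
  {in s, forall z, ~~ P z -> z <= m} -> {in u, forall z, z <= m} ->
  {in refill P s u, forall z, z <= m}.
Proof.
move=> u_size s_le u_le z; rewrite mem_refill //.
by case/orP=> [/andP[/s_le]|/u_le].
Qed.

Section IntervalRefill.
Variables a b : nat.
Local Notation I := (inab a b).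

Lemma max_tree_refill s u : size u = count I s -> all I u ->
  max_tree u = max_tree (filter I s) -> max_tree (refill I s u) = max_tree s.
Proof.
elim/max_pivot_ind: s u => [|s1 x s2 x_s1 x_max IH1 IH2] u; first by case: u.
move=> u_size u_I u_tree; rewrite (max_tree_cat x_s1 x_max).
case: (ltnP x a) => [x_lt_a|a_le_x].
  have : count I (s1 ++ x :: s2) = 0.
    apply/eqP; rewrite -leqn0 leqNgt -has_count; apply/hasPn => z /x_max.
    by rewrite /inab; lia.
  by rewrite -u_size => /size0nil u_nil; rewrite u_nil refill_nil max_tree_cat.
case: (leqP x b) => [x_le_b|b_lt_x].
  have x_I : I x by rewrite /inab a_le_x x_le_b.
  move: u_tree; rewrite (max_tree_filter_cat x_I x_s1 x_max) => /max_tree_eq_Node.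
  case=> u1 [y [u2 [u_eq y_u1 y_max u1_tree u2_tree]]].
  have [u1_size u2_size] : size u1 = count I s1 /\ size u2 = count I s2.
    by rewrite -!nodes_max_tree u1_tree u2_tree !nodes_max_tree !size_filter.
  have /and3P[u1_I y_I u2_I] : [&& all I u1, I y & all I u2].
    by move: u_I; rewrite u_eq all_cat.
  have refill_eq : refill I (s1 ++ x :: s2) u = refill I s1 u1 ++ y :: refill I s2 u2.
    by rewrite refill_cat u_eq -u1_size take_size_cat // drop_size_cat //= x_I.
  rewrite refill_eq max_tree_cat ?IH1 ?IH2 //; first by rewrite mem_refill // y_I andbF.
  rewrite -refill_eq; apply: refill_bounded => // z /x_max z_le_x.
  by move: y_I; rewrite /inab; lia.
have x_I : I x = false by rewrite /inab (leqNgt x b) b_lt_x andbF.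
set c := count I s1; set u1 := take c u; set u2 := drop c u.
have u_cnt : size u = c + count I s2 by rewrite u_size count_cat /= x_I.
have [u1_size u2_size] : size u1 = c /\ size u2 = count I s2.
  by rewrite size_takel ?size_drop u_cnt ?leq_addr ?addKn.
have [u1_tree u2_tree] : max_tree u1 = max_tree (filter I s1) /\
                         max_tree u2 = max_tree (filter I s2).
  apply: max_tree_cat_inj; first by rewrite size_filter.
  by rewrite cat_take_drop u_tree filter_cat /= x_I.
have /andP[u1_I u2_I] : all I u1 && all I u2 by rewrite -all_cat cat_take_drop.
have refill_eq : refill I (s1 ++ x :: s2) u = refill I s1 u1 ++ x :: refill I s2 u2.
  by rewrite refill_cat /= x_I.
rewrite refill_eq max_tree_cat ?IH1 ?IH2 //.
  by rewrite mem_refill // (negbTE x_s1) /=; apply: contraFN x_I => /(allP u1_I).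
rewrite -refill_eq; apply: refill_bounded => // z; first by move=> /x_max.
by move=> /(allP u_I) /andP[_ /leq_trans]; apply; apply: ltnW.
Qed.

End IntervalRefill.

Lemma filter_inab_perm n s a b : is_perm n s -> 0 < a -> b <= n ->
  perm_eq (filter (inab a b) s) (iota a (b.+1 - a)).
Proof.
move=> s_perm a_pos le_bn; apply: uniq_perm; rewrite ?iota_uniq ?filter_uniq //.
  exact: is_perm_uniq s_perm.
by move=> z; rewrite mem_filter (is_perm_mem _ s_perm) mem_iota /inab; lia.
Qed.

Lemma taubar_refill tau a b : uniq tau -> taubar tau a b =
  refill (inab a b) tau [seq a - 1 + x | x <- pbar (st (filter (inab a b) tau))].
Proof.
move=> tau_uniq; set I := inab a b; set sb := pbar _.
have sb_size : size sb = count I tau.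
  by rewrite (is_perm_size (pbar_perm (st_perm (filter_uniq I tau_uniq)))) size_filter.
apply: (@eq_from_nth _ 0); first by rewrite size_mkseq size_refill.
move=> i; rewrite size_mkseq => lt_i.
rewrite nth_mkseq //= -/I -/sb nth_refill ?size_map //; case: ifP => // i_I.
rewrite (nth_map 0) // sb_size -[in X in _ < X](cat_take_drop i tau) count_cat.
by rewrite (drop_nth 0 lt_i) /= i_I; lia.
Qed.

Theorem lemma6p2 (n : nat) (tau : seq nat) (a b : nat) :
  1 <= n -> is_perm n tau -> 1 <= a -> a < b -> b <= n ->
  lambda tau = lambda (taubar tau a b).
Proof.
move=> _ tau_perm a_pos _ le_bn.
rewrite taubar_refill ?(is_perm_uniq tau_perm) //.
set I := inab a b; set f := filter I tau; set u := map _ _.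
have f_perm : perm_eq f (iota a (b.+1 - a)) := filter_inab_perm tau_perm a_pos le_bn.
have st_perm_f : is_perm (size f) (st f).
  by apply: st_perm; rewrite (perm_uniq f_perm) iota_uniq.
have u_perm : perm_eq u f.
  have : perm_eq u (iota (a - 1 + 1) (size f)).
    by rewrite iotaDl; apply/perm_map/pbar_perm.
  by rewrite subnK // (perm_size f_perm) size_iota => /perm_trans; apply; rewrite perm_sym.
have u_size : size u = count I tau by rewrite (perm_size u_perm) size_filter.
have refill_perm_tau : is_perm n (refill I tau u).
  exact: perm_trans (refill_perm u_size u_perm) tau_perm.
rewrite (lambda_max_tree tau_perm) (lambda_max_tree refill_perm_tau).
apply/esym/max_tree_refill => //.
  by apply/allP => z; rewrite (perm_mem u_perm) mem_filter => /andP[].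
rewrite max_tree_map_mono ?(max_tree_pbar st_perm_f) ?max_tree_st // => x y _ _.
by rewrite leq_add2l.
Qed.
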